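(* Let $q\ge2$ and $L\ge2$ be integers, let $\mathcal{C}\subseteq[q]^n$ be a code, and suppose the matrix $\varphi(\mathcal{C})/\sqrt{(q-1)n}$ satisfies RIP-2 of order $L$ with constant $1/2$. Then $\mathcal{C}$ is $\Big(\big(1-\frac1q\big)\big(1-\sqrt{\frac{1.5}{L-1}}\big),\,L-1\Big)$-list decodable.
   Context: $[q]=\{0,1,\dots,q-1\}$; $\delta(x,y)$ is the fraction of coordinates where $x,y\in[q]^n$ differ. A code $\mathcal{C}$ is $(\rho,\ell)$-list decodable if for every $y\in[q]^n$ the number of $c\in\mathcal{C}$ with $\delta(c,y)<\rho$ is at most $\ell$. Simplex encoding: for $x\in[q]$, $\varphi(x)\in\mathbb{C}^{q-1}$ has coordinates $\varphi(x)(\alpha)=\omega^{x\alpha}$ for $\alpha\in\{1,\dots,q-1\}$, $\omega=e^{2\pi\mathbf{i}/q}$; for $x\in[q]^n$, $\varphi(x)\in\mathbb{C}^{n(q-1)}$ is the concatenation of $\varphi(x_1),\dots,\varphi(x_n)$. $\varphi(\mathcal{C})$ is the $(q-1)n\times|\mathcal{C}|$ matrix whose column indexed by $c\in\mathcal{C}$ is $\varphi(c)$. A matrix $M\in\mathbb{C}^{m\times N}$ satisfies RIP-2 of order $k$ with constant $\delta$ if for every $x\in\mathbb{C}^N$ with at most $k$ nonzero entries, $(1-\delta)\|x\|_2^2\le\|Mx\|_2^2\le(1+\delta)\|x\|_2^2$. *)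

From mathcomp Require Import all_boot all_order all_algebra.
From mathcomp Require Import all_classical all_reals all_analysis.
From mathcomp Require Import complex.
Set Implicit Arguments. Unset Strict Implicit. Unset Printing Implicit Defensive.
Import Order.TTheory GRing.Theory Num.Theory.
Local Open Scope ring_scope.
Local Open Scope complex_scope.

Definition word (q n : nat) := {ffun 'I_n -> 'I_q}.

Section Defs.
Variable R : realType.
Variables q n : nat.

Definition hdist (x y : word q n) : R :=
  #|[set i : 'I_n | x i != y i]|%:R / n%:R.

Definition list_decodable (C : {set word q n}) (rho : R) (l : nat) : Prop :=
  forall y : word q n, (#|[set c in C | (hdist c y < rho)%R]| <= l)%N.

Definition omega : R[i] := cos (2 * pi / q%:R) +i* sin (2 * pi / q%:R).

(* simplex encoding: phi(x) in C^{n(q-1)}; coordinate (i, alpha) for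
   i in [n] and alpha in {1,...,q-1} is omega^(x_i * alpha). *)
Definition simplex_enc (x : word q n) (i : 'I_n) (a : 'I_q) : R[i] :=
  omega ^+ (x i * a)%N.

Definition sqnorm_enc (v : 'I_n -> 'I_q -> R[i]) : R[i] :=
  \sum_(i < n) \sum_(a < q | (0 < a)%N) `|v i a| ^+ 2.

Definition scaled_mat_apply (C : {set word q n}) (x : word q n -> R[i])
  (i : 'I_n) (a : 'I_q) : R[i] :=
  \sum_(c in C) x c * simplex_enc c i a / (Num.sqrt ((q.-1 * n)%N%:R : R))%:C.

(* RIP-2 of order k with constant d for the matrix phi(C)/sqrt((q-1)n),
   whose columns are indexed by the codewords c in C; a vector of C^C is
   represented by a function x on words vanishing outside C. *)
Definition RIP2_scaled_simplex (C : {set word q n}) (k : nat) (d : R) : Prop :=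
  forall x : word q n -> R[i],
    (forall c, c \notin C -> x c = 0%R) ->
    (#|[set c | x c != 0%R]| <= k)%N ->
    ((1 - d)%:C * \sum_(c in C) `|x c| ^+ 2 <= sqnorm_enc (scaled_mat_apply C x))
    /\ (sqnorm_enc (scaled_mat_apply C x) <= (1 + d)%:C * \sum_(c in C) `|x c| ^+ 2).

End Defs.

From mathcomp Require Import all_boot all_order all_algebra.
From mathcomp Require Import all_classical all_reals all_analysis.
From mathcomp Require Import complex.
From mathcomp Require Import ring lra zify.
Set Implicit Arguments. Unset Strict Implicit. Unset Printing Implicit Defensive.
Import Order.TTheory GRing.Theory Num.Theory.
Local Open Scope ring_scope.

(* If L codewords c_j lie at relative distance < rho from y, RIP-2 bounds
   ||sum_j phi(c_j)||^2 by (3/2) L N, where N = (q-1)n, whereas orthogonality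
   of the characters of Z/q gives <phi(c_j), phi(y)> = N - q d(c_j, y) > N s,
   with s = sqrt(1.5/(L-1)).  Expanding 0 <= ||sum_j phi(c_j) - L s phi(y)||^2
   then yields 0 <= (3/2) L N - 2 L^2 s^2 N + L^2 s^2 N = - L N s^2 < 0. *)

Lemma sumr_expr_unity (R : idomainType) (z : R) (m : nat) :
  z ^+ m = 1 -> z != 1 -> \sum_(a < m) z ^+ a = 0.
Proof.
move=> zm1 z_neq1; apply/eqP; have := subrX1 z m.
by rewrite zm1 subrr => /esym/eqP; rewrite mulf_eq0 subr_eq0 (negbTE z_neq1).
Qed.

Lemma sumr_ord_gt0 (V : zmodType) (m : nat) (F : 'I_m.+1 -> V) :
  \sum_(a < m.+1 | (0 < a)%N) F a = \sum_(a < m.+1) F a - F ord0.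
Proof. by rewrite big_mkcond !big_ord_recl /= add0r [F ord0 + _]addrC addrK. Qed.

Lemma sumr_mul_indicator (V : pzSemiRingType) (I : finType) (A B : {set I})
    (F : I -> V) :
  A \subset B -> \sum_(i in B) (i \in A)%:R * F i = \sum_(i in A) F i.
Proof.
move=> sAB; rewrite (big_setID A) /= (finset.setIidPr sAB) [X in _ + X]big1 ?addr0.
  by apply: eq_bigr => i ->; rewrite mul1r.
by move=> i /setDP[_ /negbTE ->]; rewrite mul0r.
Qed.

Section ComplexExponential.
Local Open Scope complex_scope.
Variable R : realType.

(* Rewriting with the generic rmorph lemmas leaves conjc and _%:C in their
   canonical-structure form, which later rewrites do not recognise. *)
Lemma conjcM (z w : R[i]) : conjc (z * w) = conjc z * conjc w.
Proof. exact: rmorphM. Qed.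

Lemma conjcB (z w : R[i]) : conjc (z - w) = conjc z - conjc w.
Proof. exact: rmorphB. Qed.

Lemma realcM (x y : R) : (x * y)%:C = x%:C * y%:C.
Proof. exact: rmorphM. Qed.

Lemma realcD (x y : R) : (x + y)%:C = x%:C + y%:C.
Proof. exact: rmorphD. Qed.

Lemma realcB (x y : R) : (x - y)%:C = x%:C - y%:C.
Proof. exact: rmorphB. Qed.

Lemma realc_nat (k : nat) : (k%:R : R)%:C = k%:R.
Proof. exact: rmorph_nat. Qed.

Lemma realc_sum (I : finType) (A : pred I) (F : I -> R) :
  (\sum_(i in A) F i)%:C = \sum_(i in A) (F i)%:C.
Proof. exact: rmorph_sum. Qed.

Definition cis (x : R) : R[i] := cos x +i* sin x.

Lemma cis0 : cis 0 = 1.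
Proof. by rewrite /cis cos0 sin0. Qed.

Lemma cisD (x y : R) : cis x * cis y = cis (x + y).
Proof. by rewrite /cis cosD sinD; simpc; congr Complex; ring. Qed.

Lemma conjc_cis (x : R) : conjc (cis x) = cis (- x).
Proof. by rewrite /cis cosN sinN. Qed.

Lemma cis_neq1 (x : R) : `|x| < pi *+ 2 -> x != 0 -> cis x != 1.
Proof.
rewrite ltr_norml => /andP[x_gt x_lt] x_neq0; apply/negP => /eqP[].
have -> : x = (x / 2) *+ 2 by rewrite -mulr_natr mulfVK // pnatr_eq0.
rewrite cos_mulr2n => cos2x _.
have sin_half0 : sin (x / 2) = 0.
  by apply/eqP; rewrite -sqrf_eq0; have := cos2Dsin2 (x / 2); lra.
have [x_gt0|x_le0] := ltrP 0 x.
  have : 0 < sin (x / 2) by apply: sin_gt0_pi; apply/andP; split; lra.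
  lra.
have x_lt0 : x < 0 by rewrite lt_neqAle x_neq0.
have : 0 < sin (- (x / 2)) by apply: sin_gt0_pi; apply/andP; split; lra.
rewrite sinN; lra.
Qed.

Lemma omegaE (q : nat) : omega R q = cis (2 * pi / q%:R).
Proof. by []. Qed.

Lemma omega_expr (q m : nat) : omega R q ^+ m = cis (m%:R * (2 * pi / q%:R)).
Proof.
elim: m => [|m IHm]; first by rewrite mul0r cis0.
rewrite exprSr IHm omegaE cisD; set t := 2 * pi / _.
by rewrite -natr1 mulrDl mul1r.
Qed.

Lemma omega_expr_order (q : nat) : (0 < q)%N -> omega R q ^+ q = 1.
Proof.
move=> q_gt0; rewrite omega_expr mulrC divfK ?pnatr_eq0 -?lt0n // mulr_natl.
by rewrite /cis cos2pi sin2pi.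
Qed.

Lemma omega_exprB (q c y : nat) :
  omega R q ^+ c * conjc (omega R q ^+ y) = cis ((c%:R - y%:R) * (2 * pi / q%:R)).
Proof. by rewrite !omega_expr conjc_cis cisD mulrBl. Qed.

(* Orthogonality of the characters of Z/q; the term a = 0 is missing from the
   sum, whence the -1. *)
Lemma sum_omega_exprMJ (q : nat) (c y : 'I_q) : (1 < q)%N ->
  \sum_(a < q | (0 < a)%N) omega R q ^+ (c * a) * conjc (omega R q ^+ (y * a))
  = if c == y then (q.-1)%:R else -1.
Proof.
case: q c y => // q c y q_gt1.
set z := omega R q.+1 ^+ c * conjc (omega R q.+1 ^+ y).
have zE (a : 'I_q.+1) :
    omega R q.+1 ^+ (c * a) * conjc (omega R q.+1 ^+ (y * a)) = z ^+ a.
  by rewrite exprMn -rmorphXn -!exprM.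
under eq_bigr do rewrite zE.
rewrite sumr_ord_gt0 expr0.
have theta_gt0 : 0 < 2 * pi / q.+1%:R :> R by rewrite divr_gt0 ?mulr_gt0 ?pi_gt0.
have [c_eq_y|c_neq_y] := eqVneq c y.
  rewrite /z omega_exprB c_eq_y subrr mul0r cis0.
  under eq_bigr do rewrite expr1n.
  by rewrite sumr_const card_ord -natr1 addrK.
suff -> : \sum_(a < q.+1) z ^+ a = 0 by rewrite sub0r.
apply: sumr_expr_unity.
  rewrite /z exprMn -rmorphXn -!exprM !(mulnC _ q.+1) !exprM.
  by rewrite omega_expr_order // !expr1n rmorph1 mulr1.
rewrite /z omega_exprB; apply: cis_neq1.
  have cq : (c%:R : R) < q.+1%:R by rewrite ltr_nat.
  have yq : (y%:R : R) < q.+1%:R by rewrite ltr_nat.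
  have c0 : (0 : R) <= c%:R := ler0n _ _.
  have y0 : (0 : R) <= y%:R := ler0n _ _.
  have q_theta : q.+1%:R * (2 * pi / q.+1%:R) = pi *+ 2 :> R.
    by rewrite mulrC divfK ?pnatr_eq0 // mulr_natl.
  rewrite normrM (gtr0_norm theta_gt0) -q_theta ltr_pM2r //.
  by rewrite ltr_norml; apply/andP; split; lra.
by rewrite mulf_eq0 negb_or (gt_eqF theta_gt0) andbT subr_eq0 eqr_nat.
Qed.

End ComplexExponential.

Lemma exists_subset_card (T : finType) (A : {set T}) (k : nat) :
  (k <= #|A|)%N -> exists2 B : {set T}, B \subset A & #|B| = k.
Proof.
move=> k_le; exists [set x in take k (enum A)].
  by apply/fintype.subsetP => x; rewrite inE => /mem_take; rewrite mem_enum.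
rewrite cardsE; move/card_uniqP: (take_uniq k (enum_uniq (mem A))) ->.
by rewrite size_takel // -cardE.
Qed.

Section Encoding.
Local Open Scope complex_scope.
Variables (R : realType) (q n : nat).

Definition dot_enc (u v : 'I_n -> 'I_q -> R[i]) : R[i] :=
  \sum_(i < n) \sum_(a < q | (0 < a)%N) u i a * conjc (v i a).

Lemma sqnorm_encE (v : 'I_n -> 'I_q -> R[i]) : sqnorm_enc v = dot_enc v v.
Proof. by apply: eq_bigr => i _; apply: eq_bigr => a _; rewrite sqr_normc. Qed.

Lemma dot_enc_pair (u v : 'I_n -> 'I_q -> R[i]) :
  dot_enc u v = \sum_(k : 'I_n * 'I_q | (0 < k.2)%N) u k.1 k.2 * conjc (v k.1 k.2).
Proof. exact: pair_big_dep. Qed.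

Lemma sum_mulJ_subZ_ge0 (I : finType) (P : pred I) (u v : I -> R[i]) (t : R) :
  0 <= \sum_(k | P k) u k * conjc (u k)
       - t%:C * (\sum_(k | P k) u k * conjc (v k) + conjc (\sum_(k | P k) u k * conjc (v k)))
       + t%:C ^+ 2 * \sum_(k | P k) v k * conjc (v k).
Proof.
set w := fun k => u k - t%:C * v k.
have : 0 <= \sum_(k | P k) w k * conjc (w k).
  by apply: sumr_ge0 => k _; exact: mulcJ_ge0.
congr (_ <= _); rewrite rmorph_sum -big_split /= !mulr_sumr -sumrB -big_split /=.
by apply: eq_bigr => k _; rewrite /w !(conjcB, conjcM) conjc_real conjcK; ring.
Qed.

Lemma dot_enc_subZ_ge0 (u v : 'I_n -> 'I_q -> R[i]) (t : R) :
  0 <= dot_enc u u - t%:C * (dot_enc u v + conjc (dot_enc u v))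
       + t%:C ^+ 2 * dot_enc v v.
Proof. by rewrite !dot_enc_pair; exact: sum_mulJ_subZ_ge0. Qed.

Definition simplex_corr (c y : word q n) : R :=
  (q.-1 * n)%:R - (q * #|[set i | c i != y i]|)%:R.

Lemma dot_simplex_enc (w y : word q n) : (1 < q)%N ->
  dot_enc (simplex_enc R w) (simplex_enc R y) = (simplex_corr w y)%:C.
Proof.
move=> q_gt1.
transitivity (\sum_(i < n) ((q.-1)%:R - (if w i != y i then q%:R else 0)) : R[i]).
  apply: eq_bigr => i _; rewrite /simplex_enc sum_omega_exprMJ //.
  case: eqP => _ /=; first by rewrite subr0.
  by rewrite -{2}(prednK (ltnW q_gt1)) -natr1 opprD addrA subrr add0r.
rewrite sumrB -big_mkcond !sumr_const card_ord /simplex_corr rmorphB !rmorph_nat.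
by rewrite !natrM !mulr_natr cardsE.
Qed.

Lemma simplex_corr_id (y : word q n) : simplex_corr y y = (q.-1 * n)%:R.
Proof.
rewrite /simplex_corr (_ : [set i | y i != y i] = finset.set0) ?cards0 ?muln0 ?subr0 //.
by apply/finset.setP => i; rewrite !inE eqxx.
Qed.

Lemma hdist_lt_simplex_corr (c y : word q n) (s : R) : (1 < q)%N -> (0 < n)%N ->
  hdist R c y < (1 - 1 / q%:R) * (1 - s) -> (q.-1 * n)%:R * s < simplex_corr c y.
Proof.
move=> q_gt1 n_gt0; rewrite /hdist ltr_pdivrMr ?ltr0n // => dist_lt.
have q_gt0 : (0 : R) < q%:R by rewrite ltr0n ltnW.
have qB1 : (q.-1)%:R = q%:R - 1 :> R by rewrite -subn1 natrB // ltnW.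
have : q%:R * #|[set i | c i != y i]|%:R < (q%:R - 1) * (1 - s) * n%:R :> R.
  suff <- : q%:R * ((1 - 1 / q%:R) * (1 - s) * n%:R) = (q%:R - 1) * (1 - s) * n%:R.
    by rewrite ltr_pM2l.
  by field; rewrite gt_eqF.
rewrite /simplex_corr !natrM qB1; nra.
Qed.

Definition sum_enc (T : {set word q n}) (i : 'I_n) (a : 'I_q) : R[i] :=
  \sum_(c in T) simplex_enc R c i a.

Lemma dot_sum_enc (T : {set word q n}) (v : 'I_n -> 'I_q -> R[i]) :
  dot_enc (sum_enc T) v = \sum_(c in T) dot_enc (simplex_enc R c) v.
Proof.
rewrite /dot_enc [RHS]exchange_big; apply: eq_bigr => i _.
by rewrite [RHS]exchange_big; apply: eq_bigr => a _; exact: mulr_suml.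
Qed.

Lemma sum_enc_gram (T : {set word q n}) (y : word q n) (t B : R) : (1 < q)%N ->
  sqnorm_enc (sum_enc T) <= B%:C ->
  0 <= B - t * 2 * \sum_(c in T) simplex_corr c y + t ^+ 2 * (q.-1 * n)%:R.
Proof.
move=> q_gt1 norm_le; rewrite -ler0c.
have := dot_enc_subZ_ge0 (sum_enc T) (simplex_enc R y) t.
rewrite -sqnorm_encE dot_sum_enc dot_simplex_enc // simplex_corr_id.
under eq_bigr do rewrite dot_simplex_enc //.
rewrite -realc_sum conjc_real => /le_trans; apply.
rewrite realcD realcB !realcM (realc_nat R 2) -subr_ge0.
by rewrite (_ : _ - _ = B%:C - sqnorm_enc (sum_enc T)) ?subr_ge0 //; ring.
Qed.

Lemma sqnorm_scaled_indicator (C T : {set word q n}) : T \subset C ->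
  sqnorm_enc (scaled_mat_apply C (fun c => (c \in T)%:R))
  = sqnorm_enc (sum_enc T) / (q.-1 * n)%:R.
Proof.
move=> sTC; set r := Num.sqrt ((q.-1 * n)%:R : R).
rewrite !sqnorm_encE /dot_enc mulr_suml; apply: eq_bigr => i _.
rewrite mulr_suml; apply: eq_bigr => a _.
have -> : scaled_mat_apply C (fun c => (c \in T)%:R) i a = sum_enc T i a / r%:C.
  rewrite /scaled_mat_apply /sum_enc mulr_suml -(sumr_mul_indicator _ sTC).
  by apply: eq_bigr => c _; rewrite mulrA.
rewrite conjcM conjc_inv conjc_real mulrACA -invfM -realcM -expr2.
by rewrite sqr_sqrtr ?ler0n // realc_nat.
Qed.

Lemma RIP2_sqnorm_sum_enc (C T : {set word q n}) (k : nat) (d : R) :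
  (1 < q)%N -> (0 < n)%N -> RIP2_scaled_simplex C k d ->
  T \subset C -> (#|T| <= k)%N ->
  sqnorm_enc (sum_enc T) <= ((1 + d) * #|T|%:R * (q.-1 * n)%:R)%:C.
Proof.
move=> q_gt1 n_gt0 rip sTC card_T.
set x := fun c : word q n => ((c \in T)%:R : R[i]).
have x_out c : c \notin C -> x c = 0.
  by move=> cC; rewrite /x (contraNF (fintype.subsetP sTC c)).
have supp_x : [set c | x c != 0] = T.
  by apply/finset.setP => c; rewrite inE /x; case: (c \in T); rewrite ?oner_eq0 ?eqxx.
have card_x : (#|[set c | x c != 0%R]| <= k)%N by rewrite supp_x.
have [_ up] := rip x x_out card_x.
have norm_x : \sum_(c in C) `|x c| ^+ 2 = #|T|%:R.
  rewrite -sumr_const -(sumr_mul_indicator _ sTC).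
  by apply: eq_bigr => c _; rewrite /x mulr1; case: (c \in T); rewrite ?normr1 ?normr0 ?expr1n ?expr0n.
have N_gt0 : (0 < q.-1 * n)%N by rewrite muln_gt0 n_gt0 -subn1 subn_gt0 q_gt1.
rewrite norm_x (sqnorm_scaled_indicator sTC) ler_pdivrMr ?ltr0n // in up.
by rewrite !realcM !realc_nat.
Qed.

End Encoding.

Lemma gram_list_size_lt0 (R : realFieldType) (L N s p : R) :
  1 < L -> 0 < N -> 0 <= s -> s ^+ 2 * (L - 1) = 3 / 2 -> L * (N * s) <= p ->
  (1 + 1 / 2) * L * N - L * s * 2 * p + (L * s) ^+ 2 * N < 0.
Proof.
move=> L_gt1 N_gt0 s_ge0 s2 corr_ge.
have s_gt0 : 0 < s.
  rewrite lt_neqAle s_ge0 andbT; apply/eqP => s0.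
  by move: s2; rewrite -s0 expr0n mul0r; lra.
have step : L * s * 2 * (L * (N * s)) <= L * s * 2 * p.
  by rewrite ler_wpM2l // !mulr_ge0 // ltW // (lt_trans ltr01).
have -> : (1 + 1 / 2) * L * N = s ^+ 2 * (L - 1) * L * N by rewrite s2; field.
have : 0 < L * N * s ^+ 2 by rewrite !mulr_gt0 // (lt_trans ltr01).
nra.
Qed.

Theorem theorem3p5 (R : realType) (q L n : nat) (C : {set word q n}) :
  (2 <= q)%N -> (2 <= L)%N ->
  RIP2_scaled_simplex C L (1 / 2 : R) ->
  list_decodable C
    ((1 - 1 / q%:R) * (1 - Num.sqrt ((3 / 2) / (L.-1)%:R : R))) L.-1.
Proof.
move=> q_gt1 L_gt1 rip; rewrite /list_decodable => y.
rewrite leqNgt; apply/negP => ball_big.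
set s := Num.sqrt _ in ball_big; set S := [set c in C | _] in ball_big.
have [n0|n_gt0] := posnP n.
  (* hdist divides by n, so for n = 0 only the count of words helps. *)
  have : (#|S| <= 1)%N.
    by apply: leq_trans (max_card _) _; rewrite card_ffun !card_ord n0.
  lia.
have [T sTS card_T] := @exists_subset_card _ S L (leq_trans (leqSpred L) ball_big).
have sTC : T \subset C.
  by apply/fintype.subsetP => c /(fintype.subsetP sTS); rewrite inE => /andP[].
have corr_ge : L%:R * ((q.-1 * n)%:R * s) <= \sum_(c in T) simplex_corr R c y.
  rewrite -card_T mulr_natl -sumr_const; apply: ler_sum => c cT.
  apply/ltW/hdist_lt_simplex_corr => //.
  by move: (fintype.subsetP sTS c cT); rewrite inE => /andP[].
have := RIP2_sqnorm_sum_enc q_gt1 n_gt0 rip sTC (eq_leq card_T).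
rewrite card_T => /(sum_enc_gram y (L%:R * s) q_gt1).
apply/negP; rewrite -ltNge.
apply: gram_list_size_lt0 corr_ge.
- by rewrite ltr1n.
- by rewrite ltr0n muln_gt0 n_gt0 -subn1 subn_gt0 q_gt1.
- exact: sqrtr_ge0.
- have L1 : (L.-1)%:R = L%:R - 1 :> R by rewrite -subn1 natrB // ltnW.
  rewrite sqr_sqrtr ?divr_ge0 ?ler0n // -L1 divfK //.
  by rewrite pnatr_eq0 -lt0n -subn1 subn_gt0.
Qed.
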